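(* Let $\mathcal{X}\subset\mathbb{R}^d$ be bounded, $n\in\mathbb{N}$, let $\mathcal{M}_f^n$ be the set of finite Borel measures on $\mathcal{X}^n$, $\mathcal{F}^n:=\{P^*\mid P\in\mathcal{M}_f^n\}$, let $S:\mathcal{F}^n\times\mathcal{X}^n\to\mathbb{R}$ be a (strictly) consistent scoring function for $\mathrm{id}_{\mathcal{F}^n}$, let $b:[0,\infty)\times[0,\infty)\to\mathbb{R}$ be a (strictly) consistent Bregman function, and $c>0$. (i) The function $S_1:\mathcal{M}_f^n\times\mathbb{M}_0\to\mathbb{R}$, $$S_1(\mu,\{y_1,\dots,y_m\})=\sum_{x_1,\dots,x_n\in\{y_1,\dots,y_m\}}S(\mu^*,x_1,\dots,x_n)+c\,b(\mu(\mathcal{X}^n),m^n)$$ for $m\in\mathbb{N}$ and $S_1(\mu,\emptyset)=c\,b(\mu(\mathcal{X}^n),0)$, is a consistent scoring function for the $n$-th moment measure. (ii) The function $S_2:\mathcal{M}_f^n\times\mathbb{M}_0\to\mathbb{R}$, $$S_2(\alpha,\{y_1,\dots,y_m\})=\sum^{\neq}_{x_1,\dots,x_n\in\{y_1,\dots,y_m\}}S(\alpha^*,x_1,\dots,x_n)+c\,b(\alpha(\mathcal{X}^n),m^{[n]})$$ for $m\ge n$ and $S_2(\alpha,\{y_1,\dots,y_m\})=c\,b(\alpha(\mathcal{X}^n),0)$ for $m<n$, is a consistent scoring function for the $n$-th factorial moment measure. Both $S_1$ and $S_2$ are strictly consistent if $S$ and $b$ are strictly consistent.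
   Context: $\mathbb{M}_0$ is the space of finite counting measures on $\mathcal{X}$, realizations written as point sets. For a finite measure $P$, $P^*:=P/P(\text{whole space})$. For a point process $\Phi$ the $n$-th moment measure $\mu^{(n)}$ and $n$-th factorial moment measure $\alpha^{(n)}$ satisfy $\mathbb{E}\sum_{x_1,\dots,x_n\in\Phi}f(x_1,\dots,x_n)=\int f\,d\mu^{(n)}$ and $\mathbb{E}\sum^{\neq}_{x_1,\dots,x_n\in\Phi}f(x_1,\dots,x_n)=\int f\,d\alpha^{(n)}$ for positive measurable $f$, where $\sum^{\neq}$ runs over $n$-tuples of distinct points and the plain sum over all $n$-tuples. Factorial product: $m^{[n]}=m(m-1)\cdots(m-n+1)$ if $m\ge n$, and $0$ if $m<n$. A Bregman function is $b(x,y)=-f(x)-f'(x)(y-x)$ for convex $f$, strictly consistent if $f$ is strictly convex. Consistency of a scoring function $S$ for a functional $\Gamma$: $\mathbb{E}_PS(a,\Phi)\ge\mathbb{E}_PS(\Gamma(P),\Phi)$ for all reports $a$ and distributions $P$ in the class (expectations assumed to exist); strict if equality implies $a=\Gamma(P)$. *)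

From HB Require Import structures.
From mathcomp Require Import all_boot all_order all_algebra.
From mathcomp Require Import all_classical all_reals all_analysis.
Set Implicit Arguments. Unset Strict Implicit. Unset Printing Implicit Defensive.
Import Order.TTheory GRing.Theory Num.Theory.
Local Open Scope classical_set_scope.
Local Open Scope ring_scope.

Section PPScores.
Context {R : realType} (d n : nat).

(* points of R^d are d-tuples of reals (Borel = product sigma-algebra);
   the space X^n is a subset of n-tuples of points *)
Local Notation pt := (d.-tuple R).
Local Notation T := (n.-tuple pt).

Definition bounded_Rd (X : set pt) : Prop :=
  exists M : R, forall x, X x -> forall i, `|tnth x i| <= M.

Definition powset (X : set pt) : set T := [set t | forall i, X (tnth t i)].

Definition mstar (mu : set T -> \bar R) : set T -> \bar R :=
  fun A => (mu A * ((fine (mu [set: T]))^-1)%:E)%E.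

(* the n-tuple (x_{t_1}, ..., x_{t_n}) of points of the configuration
   s = [:: y_1; ...; y_m] selected by the index tuple t *)
Definition sel (s : seq pt) (t : n.-tuple 'I_(size s)) : T :=
  map_tuple (tnth (in_tuple s)) t.

(* A finite point process on X, given as a random finite configuration
   Phi : Omega -> seq pt (points listed with multiplicity, in some order):
   the number of points is measurable and each listed point is a measurable
   function on the event where it exists. *)
Definition point_process {dO : measure_display} {O : measurableType dO}
  (X : set pt) (Phi : O -> seq pt) : Prop :=
  [/\ forall w x, x \in Phi w -> X x,
      forall k : nat, measurable [set w | size (Phi w) = k] &
      forall (i : nat) (x0 : pt),
        measurable_fun [set w | (i < size (Phi w))%N] (fun w => nth x0 (Phi w) i)].

Definition moment_measure {dO : measure_display} {O : measurableType dO}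
  (P : probability O R) (Phi : O -> seq pt) (A : set T) : \bar R :=
  (\int[P]_w (\sum_(t : n.-tuple 'I_(size (Phi w))) \1_A (sel t))%:E)%E.

Definition factorial_moment_measure {dO : measure_display} {O : measurableType dO}
  (P : probability O R) (Phi : O -> seq pt) (A : set T) : \bar R :=
  (\int[P]_w (\sum_(t : n.-tuple 'I_(size (Phi w)) | uniq t) \1_A (sel t))%:E)%E.

Definition bregman (strict : bool) (b : R -> R -> R) : Prop :=
  exists f f' : R -> R,
  [/\ forall x y, 0 <= x -> 0 <= y -> f x + f' x * (y - x) <= f y,
      strict -> forall x y, 0 <= x -> 0 <= y -> x != y ->
                  f x + f' x * (y - x) < f y &
      forall x y, 0 <= x -> 0 <= y -> b x y = - f x - f' x * (y - x)].

(* (strict) consistency of S : F^n x X^n -> R for the identity on F^n,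
   F^n = probability measures on X^n (normalized finite measures);
   expectations are assumed to exist (integrability). *)
Definition consistent_id (strict : bool) (X : set pt)
  (S : (set T -> \bar R) -> T -> R) : Prop :=
  forall Q Q' : probability T R,
    Q (~` powset X) = 0%E -> Q' (~` powset X) = 0%E ->
    Q.-integrable [set: T] (EFin \o S Q) ->
    Q.-integrable [set: T] (EFin \o S Q') ->
    (\int[Q]_x (S Q x)%:E <= \int[Q]_x (S Q' x)%:E)%E /\
    (strict -> (\int[Q]_x (S Q x)%:E = \int[Q]_x (S Q' x)%:E)%E ->
       forall A, measurable A -> Q' A = Q A).

Definition S1 (X : set pt) (S : (set T -> \bar R) -> T -> R) (b : R -> R -> R)
  (c : R) (mu : set T -> \bar R) (s : seq pt) : R :=
  if s is [::] then c * b (fine (mu (powset X))) 0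
  else \sum_(t : n.-tuple 'I_(size s)) S (mstar mu) (sel t)
       + c * b (fine (mu (powset X))) ((size s) ^ n)%:R.

(* S_2, with m^[n] = m ^_ n (falling factorial, 0 if m < n) *)
Definition S2 (X : set pt) (S : (set T -> \bar R) -> T -> R) (b : R -> R -> R)
  (c : R) (mu : set T -> \bar R) (s : seq pt) : R :=
  if (size s < n)%N then c * b (fine (mu (powset X))) 0
  else \sum_(t : n.-tuple 'I_(size s) | uniq t) S (mstar mu) (sel t)
       + c * b (fine (mu (powset X))) ((size s) ^_ n)%:R.

(* Reports are finite
   nonzero measures on X^n.  "Expectations exist" is read as
   E_P sum_{selected tuples} |S(a^*, x)| < oo for the report a and for the
   true value nu ([Ex a s] is that integrand). *)
Definition consistent_pp (strict : bool) (X : set pt)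
  (Gamma : forall (dO : measure_display) (O : measurableType dO),
             probability O R -> (O -> seq pt) -> set T -> \bar R)
  (Sc : (set T -> \bar R) -> seq pt -> R)
  (Ex : (set T -> \bar R) -> seq pt -> \bar R) : Prop :=
  forall (dO : measure_display) (O : measurableType dO)
         (P : probability O R) (Phi : O -> seq pt),
  point_process X Phi ->
  forall nu : {finite_measure set T -> \bar R},
  (forall A, measurable A -> nu A = Gamma _ _ P Phi A) ->
  forall mu : {finite_measure set T -> \bar R},
  mu (~` powset X) = 0%E -> (0 < mu (powset X))%E ->
  (\int[P]_w Ex mu (Phi w) < +oo)%E ->
  (\int[P]_w Ex nu (Phi w) < +oo)%E ->
  (\int[P]_w (Sc nu (Phi w))%:E <= \int[P]_w (Sc mu (Phi w))%:E)%E /\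
  (strict -> (\int[P]_w (Sc nu (Phi w))%:E = \int[P]_w (Sc mu (Phi w))%:E)%E ->
     forall A, measurable A -> mu A = nu A).

Definition Ex1 (S : (set T -> \bar R) -> T -> R) (mu : set T -> \bar R)
  (s : seq pt) : \bar R :=
  (\sum_(t : n.-tuple 'I_(size s)) `|S (mstar mu) (sel t)|)%:E.
Definition Ex2 (S : (set T -> \bar R) -> T -> R) (mu : set T -> \bar R)
  (s : seq pt) : \bar R :=
  (\sum_(t : n.-tuple 'I_(size s) | uniq t) `|S (mstar mu) (sel t)|)%:E.

End PPScores.

From HB Require Import structures.
From mathcomp Require Import all_boot all_order all_algebra.
From mathcomp Require Import all_classical all_reals all_analysis.
From mathcomp Require Import finmap measurable_realfun ring lra.
Import Order.TTheory GRing.Theory Num.Theory numFieldNormedType.Exports.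
Import HBNNSimple.
Local Open Scope classical_set_scope.
Local Open Scope ring_scope.
Set Implicit Arguments. Unset Strict Implicit. Unset Printing Implicit Defensive.

(* The selected n-tuples of points of Phi (all of them for S_1, those of
   pairwise distinct points for S_2) form a random finite configuration Psi in
   X^n with m^n, resp. m^[n], points, whose intensity measure
   A |-> E #(Psi \cap A) is the n-th (factorial) moment measure nu.  So both
   scores have the form
     score(mu, Psi) = sum_{x in Psi} S(mu^*, x) + c b(mu(X^n), #Psi).
   By Campbell's formula E sum_{x in Psi} g(x) = int g dnu, and since b(a, .)
   is affine,
     E score(mu, Psi) = nu(X^n) int S(mu^*, .) dnu^* + c b(mu(X^n), nu(X^n)).
   Consistency of S makes the first term minimal at mu^* = nu^*, consistency
   of b makes the second one minimal at mu(X^n) = nu(X^n); in the strict case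
   equality of expected scores forces both, hence mu = nu. *)

Lemma monotone_convergence_EFin {R : realType} {dT : measure_display} {T : measurableType dT}
    (mu : {measure set T -> \bar R}) (F : nat -> T -> R) (G : T -> R) :
  (forall k, measurable_fun setT (F k)) -> (forall k x, 0 <= F k x) ->
  (forall x, {homo F ^~ x : a b / (a <= b)%N >-> a <= b}) ->
  (forall x, F k x @[k --> \oo] --> G x) ->
  (\int[mu]_x (G x)%:E = limn (fun k => \int[mu]_x (F k x)%:E))%E.
Proof.
move=> mF F_ge0 F_nd F_cvg; rewrite -monotone_convergence //.
- apply: eq_integral => x _; apply/esym/cvg_lim => //.
  by apply: cvg_EFin; [exact: nearW | exact: F_cvg].
- by move=> k; exact/measurable_EFinP.
- by move=> k x _; rewrite lee_fin.
- by move=> x _ a b ab; rewrite lee_fin; exact: F_nd.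
Qed.

Section Campbell.
Context {R : realType} {dO dT : measure_display}.
Context {O : measurableType dO} {T : measurableType dT}.
Variables (P : probability O R) (Psi : O -> seq T).
Hypothesis measurable_sum : forall F : T -> R, measurable_fun setT F ->
  measurable_fun setT (fun w => \sum_(x <- Psi w) F x).

Definition intensity (A : set T) : \bar R :=
  (\int[P]_w (\sum_(x <- Psi w) \1_A x)%:E)%E.

Variable nu : {measure set T -> \bar R}.
Hypothesis nuE : forall A, measurable A -> nu A = intensity A.

Let measurable_sumE (F : T -> R) : measurable_fun setT F ->
  measurable_fun setT (fun w => (\sum_(x <- Psi w) F x)%:E).
Proof. by move=> mF; apply/measurable_EFinP; exact: measurable_sum. Qed.

Lemma campbell_nnsfun (h : {nnsfun T >-> R}) :
  (\int[P]_w (\sum_(x <- Psi w) h x)%:E = \int[nu]_x (h x)%:E)%E.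
Proof.
pose r := fset_set (range h).
have r_ge0 y : y \in r -> 0 <= y.
  rewrite in_fset_set; last exact: fimfunP.
  by rewrite in_setE => -[x _ <-]; exact: fun_ge0.
(* [|y|] rather than [y] (equal on the range of [h]) keeps the summands
   nonnegative for every [y], as [ge0_integral_sum] requires. *)
have hE x : h x = \sum_(y <- r) `|y| * \1_(h @^-1` [set y]) x.
  rewrite [LHS]fimfunE fsbig_finite; last exact: fimfunP.
  by apply: eq_big_seq => y /r_ge0 y_ge0; rewrite ger0_norm.
have mpre y : measurable (h @^-1` [set y]) by exact: measurable_sfunP.
have sumhE w : (\sum_(x <- Psi w) h x)%:E =
    (\sum_(y <- r) (`|y| * \sum_(x <- Psi w) \1_(h @^-1` [set y]) x)%:E)%E.
  rewrite sumEFin; congr EFin; under eq_bigr do rewrite hE.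
  by rewrite exchange_big; apply: eq_bigr => y _; rewrite mulr_sumr.
rewrite (eq_integral _ _ (in1W sumhE)); cbv beta.
under [RHS]eq_integral do rewrite hE -sumEFin.
rewrite ge0_integral_sum //; last 2 first.
- move=> y; apply/measurable_EFinP; apply: measurable_funM => //.
  exact: measurable_sum.
- by move=> y w _; rewrite lee_fin mulr_ge0 ?sumr_ge0.
rewrite [RHS]ge0_integral_sum //; last first.
  by move=> y; apply/measurable_EFinP; exact: measurable_funM.
apply: eq_bigr => y _; cbv beta.
under eq_integral do rewrite EFinM.
under [RHS]eq_integral do rewrite EFinM.
rewrite ge0_integralZl_EFin //; last 2 first.
- by move=> w _; rewrite lee_fin sumr_ge0.
- exact: measurable_sumE.
rewrite ge0_integralZl_EFin //; last exact/measurable_EFinP/measurable_indic.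
by congr (_ * _)%E; rewrite integral_indic // setIT nuE.
Qed.

Lemma campbell_ge0 (g : T -> R) : measurable_fun setT g -> (forall x, 0 <= g x) ->
  (\int[P]_w (\sum_(x <- Psi w) g x)%:E = \int[nu]_x (g x)%:E)%E.
Proof.
move=> mg g_ge0.
have mgE : measurable_fun setT (EFin \o g) by exact/measurable_EFinP.
have gE_ge0 x : setT x -> (0 <= (EFin \o g) x)%E by rewrite lee_fin.
pose h := nnsfun_approx measurableT mgE.
have h_cvg x : h k x @[k --> \oo] --> g x.
  exact: fine_cvg (cvg_nnsfun_approx measurableT mgE gE_ge0 (I : setT x)).
have h_nd x : {homo (fun k => h k x) : a b / (a <= b)%N >-> a <= b}.
  by move=> a b ab; have /lefP := nd_nnsfun_approx measurableT mgE ab; apply.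
rewrite (monotone_convergence_EFin nu (fun k => measurable_funPT (h k)) _ h_nd h_cvg); last first.
  by move=> k x; exact: fun_ge0.
rewrite (monotone_convergence_EFin P (F := fun k w => \sum_(x <- Psi w) h k x)); last 4 first.
- by move=> k; apply: measurable_sum; exact: measurable_funPT.
- by move=> k w; apply: sumr_ge0 => x _; exact: fun_ge0.
- by move=> w a b ab; apply: ler_sum => x _; exact: h_nd.
- move=> w; apply: (cvg_big add_continuous) => x _; exact: h_cvg.
by congr (limn _); apply/funext => k; exact: campbell_nnsfun.
Qed.

Lemma campbell (g : T -> R) : measurable_fun setT g ->
  (\int[P]_w (\sum_(x <- Psi w) `|g x|)%:E < +oo)%E ->
  [/\ P.-integrable setT (fun w => (\sum_(x <- Psi w) g x)%:E),
      nu.-integrable setT (EFin \o g) &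
      (\int[P]_w (\sum_(x <- Psi w) g x)%:E = \int[nu]_x (g x)%:E)%E].
Proof.
move=> mg sum_abs_finite.
have mabs : measurable_fun setT (fun x => `|g x|) by exact: measurableT_comp.
have sum_abs_ge0 w : 0 <= \sum_(x <- Psi w) `|g x| by exact: sumr_ge0.
have P_int_abs : P.-integrable setT (fun w => (\sum_(x <- Psi w) `|g x|)%:E).
  apply/integrableP; split; first exact: measurable_sumE.
  rewrite (eq_integral (fun w => (\sum_(x <- Psi w) `|g x|)%:E)) // => w _.
  by rewrite gee0_abs // lee_fin.
have nu_int_abs : nu.-integrable setT (EFin \o (fun x => `|g x|)).
  apply/integrableP; split; first exact/measurable_EFinP.
  under eq_integral do rewrite /= normr_id.
  by rewrite -campbell_ge0.
have dominated (f : T -> R) : measurable_fun setT f -> (forall x, `|f x| <= `|g x|) ->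
    P.-integrable setT (fun w => (\sum_(x <- Psi w) f x)%:E) /\
    nu.-integrable setT (EFin \o f).
  move=> mf f_le; split.
    apply: le_integrable P_int_abs => //; first exact: measurable_sumE.
    move=> w _; rewrite !abse_EFin lee_fin (ger0_norm (sum_abs_ge0 w)).
    by apply: le_trans (ler_norm_sum _ _ _) _; exact: ler_sum.
  apply: le_integrable nu_int_abs => //; first exact/measurable_EFinP.
  by move=> x _; rewrite !abse_EFin lee_fin normr_id.
have [P_int_pos nu_int_pos] : P.-integrable setT (fun w => (\sum_(x <- Psi w) g^\+ x)%:E) /\
    nu.-integrable setT (EFin \o g^\+).
  apply: dominated; first exact: measurable_funrpos.
  by move=> x; rewrite ger0_norm ?funrpos_ge0 // ge_max normr_ge0 ler_norm.
have [P_int_neg nu_int_neg] : P.-integrable setT (fun w => (\sum_(x <- Psi w) g^\- x)%:E) /\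
    nu.-integrable setT (EFin \o g^\-).
  apply: dominated; first exact: measurable_funrneg.
  by move=> x; rewrite ger0_norm ?funrneg_ge0 // ge_max normr_ge0 -normrN ler_norm.
have [P_int nu_int] := dominated g mg (fun x => lexx _).
split => //.
have posneg x : g x = g^\+ x - g^\- x by rewrite -{1}(funrposBneg g).
rewrite (eq_integral (fun w => (\sum_(x <- Psi w) g^\+ x)%:E - (\sum_(x <- Psi w) g^\- x)%:E)%E).
  rewrite integralB_EFin // (campbell_ge0 (measurable_funrpos mg) (funrpos_ge0 _)).
  rewrite (campbell_ge0 (measurable_funrneg mg) (funrneg_ge0 _)) -integralB_EFin //.
  by apply: eq_integral => x _; rewrite /= -EFinB -posneg.
move=> w _; rewrite -EFinB -sumrB; congr EFin.
by apply: eq_bigr => x _; exact: posneg.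
Qed.

Lemma intensity_setT : intensity setT = (\int[P]_w (size (Psi w))%:R%:E)%E.
Proof.
apply: eq_integral => w _; congr EFin.
by under eq_bigr do rewrite indicT; rewrite -[1]/(1%:R) -natr_sum sum1_size.
Qed.

Lemma intensity_setC (D : set T) : (forall w x, x \in Psi w -> D x) ->
  intensity (~` D) = 0%E.
Proof.
move=> Psi_D; rewrite /intensity (eq_integral (cst 0%E)) ?integral0 // => w _.
rewrite big_seq big1 // => x /Psi_D Dx.
by rewrite indicE memNset //= => /(_ Dx).
Qed.

Lemma campbell_size : nu setT \is a fin_num ->
  P.-integrable setT (fun w => (size (Psi w))%:R%:E) /\
  (\int[P]_w (size (Psi w))%:R%:E = nu setT)%E.
Proof.
move=> nu_fin; have size_mean : (\int[P]_w (size (Psi w))%:R%:E = nu setT)%E.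
  by rewrite nuE // intensity_setT.
split => //; apply/integrableP; split.
  apply/measurable_EFinP; apply: eq_measurable_fun (measurable_sum (measurable_cst (1 : R))).
  by move=> w _; rewrite /= -[1]/(1%:R) -natr_sum sum1_size.
under eq_integral do rewrite gee0_abs ?lee_fin //.
by rewrite size_mean ltey_eq nu_fin.
Qed.

End Campbell.

Section MeasureLemmas.
Context {R : realType} {dT : measure_display} {T : measurableType dT}.

Lemma measure_setT_null_compl (m : {measure set T -> \bar R}) (A : set T) :
  measurable A -> m (~` A) = 0%E -> m setT = m A.
Proof.
move=> mA mAC0.
rewrite -(setUv A) (measureU m mA (measurableC mA) (setICr A)).
by rewrite -[RHS]adde0; congr (_ + _)%E.
Qed.

Lemma integral_scaled_measure (mu1 mu2 : {measure set T -> \bar R}) (k : R) :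
  0 < k -> (forall A, measurable A -> mu1 A = (k%:E * mu2 A)%E) ->
  forall g : T -> R, mu1.-integrable setT (EFin \o g) ->
  mu2.-integrable setT (EFin \o g) /\
  (\int[mu1]_x (g x)%:E = k%:E * \int[mu2]_x (g x)%:E)%E.
Proof.
move=> k_gt0 mu1E g g_int1.
have mg : measurable_fun setT (EFin \o g) := measurable_int _ g_int1.
pose kk : {nonneg R} := NngNum (ltW k_gt0).
have ge0_integral_scaled (F : T -> \bar R) : measurable_fun setT F ->
    (forall x, 0 <= F x)%E -> (\int[mu1]_x F x = k%:E * \int[mu2]_x F x)%E.
  move=> mF F_ge0.
  rewrite (@eq_measure_integral _ _ _ setT (mscale kk mu2)); last first.
    by move=> A mA _; rewrite mu1E.
  by rewrite ge0_integral_mscale.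
have g_int2 : mu2.-integrable setT (EFin \o g).
  apply/integrableP; split => //.
  have /integrableP[_] := g_int1.
  rewrite ge0_integral_scaled //; last exact: measurableT_comp mg.
  rewrite !ltey; apply: contra_neq => ->.
  by rewrite gt0_muley ?lte_fin.
split => //.
rewrite integralE [in RHS]integralE.
rewrite (ge0_integral_scaled _ (measurable_funepos mg)) //.
rewrite (ge0_integral_scaled _ (measurable_funeneg mg)) //.
have pos_fin := integrable_pos_fin_num measurableT g_int2.
have neg_fin := integrable_neg_fin_num measurableT g_int2.
by rewrite -(fineK pos_fin) -(fineK neg_fin) -!EFinM -!EFinB mulrBr.
Qed.

End MeasureLemmas.

Lemma integral_affine_EFin {R : realType} {dO : measure_display} {O : measurableType dO}
    (P : probability O R) (K : O -> R) (u v k : R) :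
  P.-integrable setT (EFin \o K) -> (\int[P]_w (K w)%:E = k%:E)%E ->
  P.-integrable setT (EFin \o (fun w => u + v * K w)) /\
  (\int[P]_w (u + v * K w)%:E = (u + v * k)%:E)%E.
Proof.
move=> K_int K_mean.
have u_int := finite_measure_integrable_cst P u measurableT.
have vK_int : P.-integrable setT (EFin \o (fun w => v * K w)).
  apply: (eq_integrable measurableT _ _ _ (integrableZl measurableT v K_int)).
  by move=> w _; rewrite /= EFinM.
split.
  apply: (eq_integrable measurableT _ _ _ (integrableD measurableT u_int vK_int)).
  by move=> w _; rewrite /= EFinD.
rewrite (eq_integral ((EFin \o cst u) \+ (EFin \o (fun w => v * K w)))); last first.
  by move=> w _; rewrite /= EFinD.
rewrite integralD_EFin //.
rewrite (eq_integral (cst u%:E)) // integral_cst //.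
rewrite (eq_integral (fun w => v%:E * (K w)%:E)%E); last by move=> w _; rewrite /= EFinM.
rewrite integralZl // K_mean EFinD EFinM; congr (_ + _)%E.
by rewrite -[RHS]mule1; congr (_ * _)%E; exact: probability_setT.
Qed.

Section Bregman.
Context {R : realType} (b : R -> R -> R) (strict : bool).
Hypothesis b_bregman : bregman strict b.

Lemma bregman_le (a y : R) : 0 <= a -> 0 <= y -> b y y <= b a y.
Proof.
have [f [f' [f_convex _ bE]]] := b_bregman; move=> a_ge0 y_ge0.
by rewrite !bE //; have := f_convex a y a_ge0 y_ge0; lra.
Qed.

Lemma bregman_eq (a y : R) : strict -> 0 <= a -> 0 <= y -> b a y = b y y -> a = y.
Proof.
have [f [f' [_ f_strict bE]]] := b_bregman; move=> /f_strict {}f_strict a_ge0 y_ge0.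
rewrite !bE //; apply: contra_eq => /(f_strict _ _ a_ge0 y_ge0); lra.
Qed.

Lemma integral_bregman {dO : measure_display} {O : measurableType dO}
    (P : probability O R) (K : O -> R) (a k : R) :
  0 <= a -> (forall w, 0 <= K w) ->
  P.-integrable setT (EFin \o K) -> (\int[P]_w (K w)%:E = k%:E)%E ->
  P.-integrable setT (EFin \o (fun w => b a (K w))) /\
  (\int[P]_w (b a (K w))%:E = (b a k)%:E)%E.
Proof.
move=> a_ge0 K_ge0 K_int K_mean.
have [f [f' [_ _ bE]]] := b_bregman.
have k_ge0 : 0 <= k by rewrite -lee_fin -K_mean integral_ge0 // => w _; rewrite lee_fin.
have affine y : 0 <= y -> b a y = (- f a + f' a * a) + (- f' a) * y.
  by move=> y_ge0; rewrite bE //; ring.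
have [int_affine mean_affine] := integral_affine_EFin (- f a + f' a * a) (- f' a) K_int K_mean.
split.
  by apply: (eq_integrable measurableT _ _ _ int_affine) => w _; rewrite /= affine.
by rewrite affine // -mean_affine; apply: eq_integral => w _; rewrite affine.
Qed.

End Bregman.

Section IntensityScore.
Context {R : realType} (d n : nat).
Local Notation pt := (d.-tuple R).
Local Notation T := (n.-tuple pt).

Lemma measurable_powset (X : set pt) : measurable X -> measurable (powset X : set T).
Proof.
move=> mX; have -> : powset X = \bigcap_(i in [set: 'I_n]) (@tnth n pt ^~ i @^-1` X).
  by apply/seteqP; split => t /= tX i => [_|]; apply: tX.
apply: fin_bigcap_measurable => [|i _]; first exact: finite_finset.
by rewrite -[_ @^-1` _]setTI; exact: measurable_tnth.
Qed.

Lemma mnormalizeE (m : {finite_measure set T -> \bar R}) (P0 : probability T R) :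
  0 < fine (m setT) -> mnormalize m P0 = mstar m :> (set T -> \bar R).
Proof.
move=> m_pos; apply/funext => A; rewrite /mnormalize /mstar.
suff -> : (m setT == 0%E) || (m setT == +oo%E) = false by [].
by apply/negbTE; rewrite negb_or; apply/andP; split; apply/eqP => mT;
  move: m_pos; rewrite mT ltxx.
Qed.

Lemma finite_measure_mstar (m : {finite_measure set T -> \bar R}) (A : set T) :
  0 < fine (m setT) -> measurable A -> m A = ((fine (m setT))%:E * mstar m A)%E.
Proof.
move=> m_pos mA; rewrite /mstar -(fineK (fin_num_measure m A mA)) -!EFinM.
by rewrite mulrCA mulfV ?mulr1 // gt_eqF.
Qed.

Variables (X : set pt) (S : (set T -> \bar R) -> T -> R) (strict : bool).
Hypothesis mS : forall Q, measurable_fun setT (S Q).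
Hypothesis S_consistent : consistent_id strict X S.

Lemma consistent_id_finite_measure (nu mu : {finite_measure set T -> \bar R}) :
  nu (~` powset X) = 0%E -> mu (~` powset X) = 0%E -> 0 < fine (mu setT) ->
  nu.-integrable setT (EFin \o S (mstar nu)) ->
  nu.-integrable setT (EFin \o S (mstar mu)) ->
  (\int[nu]_x (S (mstar nu) x)%:E <= \int[nu]_x (S (mstar mu) x)%:E)%E /\
  (strict -> 0 < fine (nu setT) ->
   (\int[nu]_x (S (mstar nu) x)%:E = \int[nu]_x (S (mstar mu) x)%:E)%E ->
   forall A, measurable A -> mstar mu A = mstar nu A).
Proof.
move=> nu_out mu_out mu_pos nu_int mu_int.
have /orP[/eqP N0|N_pos] : (fine (nu setT) == 0) || (0 < fine (nu setT)).
  by rewrite -le0r fine_ge0.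
  have nuT0 : nu setT = 0%E by rewrite -[LHS]fineK ?N0 // fin_num_measure.
  rewrite !null_set_integral //; first by split => // _; rewrite N0 ltxx.
  - exact: measurable_int mu_int.
  - exact: measurable_int nu_int.
(* [point] is only the fallback of [mnormalize] for null or infinite measures. *)
pose Q : probability T R := mnormalize nu point.
pose Q' : probability T R := mnormalize mu point.
have QE : Q = mstar nu :> (set T -> \bar R) := mnormalizeE _ N_pos.
have Q'E : Q' = mstar mu :> (set T -> \bar R) := mnormalizeE _ mu_pos.
have nu_scaled A : measurable A -> nu A = ((fine (nu setT))%:E * Q A)%E.
  by move=> mA; rewrite QE finite_measure_mstar.
have [Q_int nu_mean] := integral_scaled_measure N_pos nu_scaled nu_int.
have [Q'_int mu_mean] := integral_scaled_measure N_pos nu_scaled mu_int.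
have SQ : S Q = S (mstar nu) by rewrite QE.
have SQ' : S Q' = S (mstar mu) by rewrite Q'E.
have Q_out : Q (~` powset X) = 0%E by rewrite QE /mstar nu_out mul0e.
have Q'_out : Q' (~` powset X) = 0%E by rewrite Q'E /mstar mu_out mul0e.
have := S_consistent Q_out Q'_out; rewrite SQ SQ' => /(_ Q_int Q'_int)[Q_le Q_eq].
rewrite nu_mean mu_mean.
have a_fin := integrable_fin_num measurableT Q_int.
have b_fin := integrable_fin_num measurableT Q'_int.
split; first by rewrite lee_pmul2l ?lte_fin.
move=> strict_S _ /eqP; rewrite -(fineK a_fin) -(fineK b_fin) -!EFinM eqe.
rewrite (inj_eq (mulfI (lt0r_neq0 N_pos))) => /eqP int_eq A mA.
rewrite -QE -Q'E; apply: Q_eq => //.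
by rewrite -(fineK a_fin) -(fineK b_fin) int_eq.
Qed.

Variables (b : R -> R -> R) (c : R).
Hypothesis b_bregman : bregman strict b.
Hypothesis c_gt0 : 0 < c.

Definition score (mu : set T -> \bar R) (L : seq T) : R :=
  \sum_(x <- L) S (mstar mu) x + c * b (fine (mu (powset X))) (size L)%:R.

Section Expectation.
Context {dO : measure_display} {O : measurableType dO}.
Variables (P : probability O R) (Psi : O -> seq T).
Hypothesis measurable_sum : forall F : T -> R, measurable_fun setT F ->
  measurable_fun setT (fun w => \sum_(x <- Psi w) F x).
Variable nu : {finite_measure set T -> \bar R}.
Hypothesis nuE : forall A, measurable A -> nu A = intensity P Psi A.

Lemma integral_score (m : {finite_measure set T -> \bar R}) :
  (\int[P]_w (\sum_(x <- Psi w) `|S (mstar m) x|)%:E < +oo)%E ->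
  nu.-integrable setT (EFin \o S (mstar m)) /\
  (\int[P]_w (score m (Psi w))%:E =
   \int[nu]_x (S (mstar m) x)%:E + (c * b (fine (m (powset X))) (fine (nu setT)))%:E)%E.
Proof.
move=> S_abs_finite.
have [S_sum_int S_int S_mean] := campbell measurable_sum nuE (mS (mstar m)) S_abs_finite.
have [size_int size_mean] := campbell_size measurable_sum nuE (fin_num_measure nu setT measurableT).
have {}size_mean : (\int[P]_w (size (Psi w))%:R%:E = (fine (nu setT))%:E)%E.
  by rewrite size_mean fineK // fin_num_measure.
have [b_int b_mean] := integral_bregman b_bregman (K := fun w => (size (Psi w))%:R)
  (fine_ge0 (measure_ge0 m (powset X))) (fun w => ler0n _ _) size_int size_mean.
split => //.
set a := fine (m (powset X)) in b_mean *.
rewrite (eq_integral ((fun w => (\sum_(x <- Psi w) S (mstar m) x)%:E) \+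
                      (fun w => c%:E * (b a (size (Psi w))%:R)%:E))%E); last first.
  by move=> w _; rewrite /= EFinD EFinM.
rewrite integralD //; last exact: integrableZl.
by rewrite S_mean integralZl // b_mean EFinM.
Qed.

End Expectation.

Hypothesis mX : measurable X.

Theorem intensity_score_consistent {dO : measure_display} {O : measurableType dO}
    (P : probability O R) (Psi : O -> seq T) :
  (forall F : T -> R, measurable_fun setT F ->
     measurable_fun setT (fun w => \sum_(x <- Psi w) F x)) ->
  (forall w x, x \in Psi w -> powset X x) ->
  forall nu : {finite_measure set T -> \bar R},
  (forall A, measurable A -> nu A = intensity P Psi A) ->
  forall mu : {finite_measure set T -> \bar R},
  mu (~` powset X) = 0%E -> (0 < mu (powset X))%E ->
  (\int[P]_w (\sum_(x <- Psi w) `|S (mstar mu) x|)%:E < +oo)%E ->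
  (\int[P]_w (\sum_(x <- Psi w) `|S (mstar nu) x|)%:E < +oo)%E ->
  (\int[P]_w (score nu (Psi w))%:E <= \int[P]_w (score mu (Psi w))%:E)%E /\
  (strict -> (\int[P]_w (score nu (Psi w))%:E = \int[P]_w (score mu (Psi w))%:E)%E ->
   forall A, measurable A -> mu A = nu A).
Proof.
move=> measurable_sum Psi_X nu nuE mu mu_out mu_pos mu_abs nu_abs.
have mXn := measurable_powset mX.
have nu_out : nu (~` powset X) = 0%E.
  by rewrite nuE ?intensity_setC //; exact: measurableC.
have [nu_int ->] := integral_score measurable_sum nuE nu_abs.
have [mu_int ->] := integral_score measurable_sum nuE mu_abs.
rewrite -(measure_setT_null_compl mXn nu_out) -(measure_setT_null_compl mXn mu_out).
set N := fine (nu setT); set M := fine (mu setT).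
have N_ge0 : 0 <= N := fine_ge0 (measure_ge0 nu setT).
have M_pos : 0 < M.
  rewrite /M (measure_setT_null_compl mXn mu_out) fine_gt0 // mu_pos.
  by rewrite ltey_eq fin_num_measure.
have [S_le S_eq] := consistent_id_finite_measure nu_out mu_out M_pos nu_int mu_int.
have cb_le : c * b N N <= c * b M N by rewrite ler_pM2l // (bregman_le b_bregman) // ltW.
rewrite -(fineK (integrable_fin_num measurableT nu_int)) in S_le S_eq *.
rewrite -(fineK (integrable_fin_num measurableT mu_int)) in S_le S_eq *.
rewrite lee_fin in S_le; rewrite -!EFinD lee_fin; split; first lra.
move=> strict_S [] score_eq A mA.
have MN : M = N.
  apply: (bregman_eq b_bregman strict_S (ltW M_pos) N_ge0).
  by apply: (mulfI (lt0r_neq0 c_gt0)); lra.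
have N_pos : 0 < N by rewrite -MN.
have S_int_eq : fine (\int[nu]_x (S (mstar nu) x)%:E) = fine (\int[nu]_x (S (mstar mu) x)%:E).
  by rewrite MN in score_eq; lra.
rewrite (finite_measure_mstar M_pos mA) (finite_measure_mstar N_pos mA) -/M -/N MN.
by rewrite (S_eq strict_S N_pos _ A mA) // S_int_eq.
Qed.

End IntensityScore.

Section Selections.
Context {R : realType} (d n : nat).
Local Notation pt := (d.-tuple R).
Local Notation T := (n.-tuple pt).
Variable p : forall m, pred (n.-tuple 'I_m).

Definition selections (s : seq pt) : seq T :=
  [seq sel t | t <- index_enum (n.-tuple 'I_(size s)) & p t].

Lemma big_selections (s : seq pt) (F : T -> R) :
  \sum_(x <- selections s) F x = \sum_(t : n.-tuple 'I_(size s) | p t) F (sel t).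
Proof. by rewrite big_map big_filter. Qed.

Lemma sum_selections_nth (s : seq pt) k x0 (F : T -> R) : size s = k ->
  \sum_(x <- selections s) F x =
  \sum_(t : n.-tuple 'I_k | p t) F (map_tuple (fun i : 'I_k => nth x0 s i) t).
Proof.
move=> <-; rewrite big_selections; apply: eq_bigr => t _; congr F.
by apply: eq_from_tnth => j; rewrite !tnth_map (tnth_nth x0).
Qed.

Lemma selections_powset (X : set pt) (s : seq pt) :
  (forall y, y \in s -> X y) -> forall x, x \in selections s -> powset X x.
Proof.
by move=> sX _ /mapP[t _ ->] i; rewrite /sel tnth_map; apply: sX; exact: mem_tnth.
Qed.

Lemma size_selections (s : seq pt) : size (selections s) = #|@p (size s)|.
Proof. by rewrite -sum1_size big_map big_filter; exact: sum1_card. Qed.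

End Selections.

Lemma size_selections_all {R : realType} d n (s : seq (d.-tuple R)) :
  size (selections (fun m (_ : n.-tuple 'I_m) => true) s) = (size s ^ n)%N.
Proof. by rewrite size_selections eq_cardT // -cardT card_tuple card_ord. Qed.

Lemma size_selections_uniq {R : realType} d n (s : seq (d.-tuple R)) :
  size (selections (fun m (t : n.-tuple 'I_m) => uniq t) s) = (size s ^_ n)%N.
Proof.
rewrite size_selections -[in RHS](card_ord (size s)) -card_uniq_tuples.
by apply: eq_card => t; rewrite inE all_predT.
Qed.

Section PointProcess.
Context {R : realType} (d n : nat) {dO : measure_display} {O : measurableType dO}.
Local Notation pt := (d.-tuple R).
Local Notation T := (n.-tuple pt).
Variable Phi : O -> seq pt.
Hypothesis measurable_size : forall k, measurable [set w | size (Phi w) = k].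
Hypothesis measurable_nth : forall i x0,
  measurable_fun [set w | (i < size (Phi w))%N] (fun w => nth x0 (Phi w) i).

Lemma measurable_fun_by_size {dY : measure_display} {Y : measurableType dY} (h : O -> Y) :
  (forall k, measurable_fun [set w | size (Phi w) = k] h) -> measurable_fun setT h.
Proof.
move=> mh; have -> : [set: O] = \bigcup_k [set w | size (Phi w) = k].
  by apply/seteqP; split => w // _; exists (size (Phi w)).
exact/measurable_fun_bigcup.
Qed.

Lemma measurable_size_gt i : measurable [set w | (i < size (Phi w))%N].
Proof.
have -> : [set w | (i < size (Phi w))%N] = \bigcup_k [set w | size (Phi w) = (k + i.+1)%N].
  apply/seteqP; split => w /=; last by move=> [k _ ->]; rewrite addnS ltnS leq_addl.
  by move=> i_lt; exists (size (Phi w) - i.+1)%N => //=; rewrite subnK.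
exact: bigcupT_measurable.
Qed.

Lemma measurable_nthT i x0 : measurable_fun setT (fun w => nth x0 (Phi w) i).
Proof.
apply: measurable_fun_by_size => k; have [i_lt|k_le] := ltnP i k.
  have sub : [set w | size (Phi w) = k] `<=` [set w | (i < size (Phi w))%N].
    by move=> w /= ->.
  exact: measurable_funS (measurable_size_gt i) sub (@measurable_nth i x0).
apply: (eq_measurable_fun (cst x0)); last exact: measurable_cst.
by move=> w; rewrite in_setE /= => size_k; rewrite nth_default // size_k.
Qed.

Lemma measurable_sum_selections (p : forall m, pred (n.-tuple 'I_m)) (F : T -> R) :
  measurable_fun setT F ->
  measurable_fun setT (fun w => \sum_(x <- selections p (Phi w)) F x).
Proof.
move=> mF; apply: measurable_fun_by_size => k.
pose x0 : pt := point.
apply: (eq_measurable_fun (fun w => \sum_(t <- [seq t <- index_enum _ | p k t])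
                                   F (map_tuple (fun i : 'I_k => nth x0 (Phi w) i) t))).
  move=> w; rewrite in_setE /= => size_k.
  by rewrite big_filter (sum_selections_nth p x0 F size_k).
apply/measurable_funTS/measurable_sum => t; apply: measurableT_comp mF _.
apply/measurable_fun_tnthP => j.
by apply: eq_measurable_fun (measurable_nthT (tnth t j) x0) => w _; rewrite /= tnth_map.
Qed.

End PointProcess.

Section PointProcessScores.
Context {R : realType} (d n : nat).
Local Notation pt := (d.-tuple R).
Local Notation T := (n.-tuple pt).
Variables (X : set pt) (S : (set T -> \bar R) -> T -> R) (b : R -> R -> R) (c : R).

Lemma consistent_pp_selections (strict : bool) (p : forall m, pred (n.-tuple 'I_m))
    (Gamma : forall (dO : measure_display) (O : measurableType dO),
               probability O R -> (O -> seq pt) -> set T -> \bar R)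
    (Sc : (set T -> \bar R) -> seq pt -> R) (Ex : (set T -> \bar R) -> seq pt -> \bar R) :
  measurable X -> (forall Q, measurable_fun setT (S Q)) ->
  consistent_id strict X S -> bregman strict b -> 0 < c ->
  (forall dO O P Phi A, Gamma dO O P Phi A = intensity P (selections p \o Phi) A) ->
  Sc = (fun mu s => score X S b c mu (selections p s)) ->
  Ex = (fun mu s => (\sum_(x <- selections p s) `|S (mstar mu) x|)%:E) ->
  consistent_pp strict X Gamma Sc Ex.
Proof.
move=> mX mS S_consistent b_bregman c_gt0 GammaE -> -> dO O P Phi [Phi_X msize mnth].
move=> nu nuE; apply: (intensity_score_consistent mS S_consistent b_bregman c_gt0 mX).
- exact: measurable_sum_selections.
- by move=> w; apply: selections_powset; exact: Phi_X.
- by move=> A mA; rewrite nuE // GammaE.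
Qed.

(* For [n = 0] the empty configuration would still have one (empty) selection. *)
Lemma S1E : (0 < n)%N ->
  S1 X S b c = (fun mu s => score X S b c mu (selections (fun m (_ : n.-tuple 'I_m) => true) s)).
Proof.
move=> n_gt0; apply/funext => mu; apply/funext => s.
rewrite /S1 /score size_selections_all; case: s => [|y s].
  rewrite (size0nil (_ : size (selections _ [::]) = 0%N)) ?big_nil ?add0r ?exp0n //.
  by rewrite size_selections_all exp0n.
by rewrite big_selections.
Qed.

Lemma S2E :
  S2 X S b c = (fun mu s => score X S b c mu (selections (fun m (t : n.-tuple 'I_m) => uniq t) s)).
Proof.
apply/funext => mu; apply/funext => s.
rewrite /S2 /score size_selections_uniq; case: ltnP => [s_small|_].
  rewrite (size0nil (_ : size (selections _ s) = 0%N)) ?big_nil ?add0r ?ffact_small //.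
  by rewrite size_selections_uniq ffact_small.
by rewrite big_selections.
Qed.

End PointProcessScores.

Theorem proposition3p10 (R : realType) (d n : nat) (X : set (d.-tuple R))
  (S : (set (n.-tuple (d.-tuple R)) -> \bar R) -> n.-tuple (d.-tuple R) -> R)
  (b : R -> R -> R) (c : R) (strict : bool) :
  (0 < n)%N -> measurable X -> bounded_Rd X ->
  (forall Q, measurable_fun [set: n.-tuple (d.-tuple R)] (S Q)) ->
  consistent_id strict X S -> bregman strict b -> 0 < c ->
  consistent_pp strict X (@moment_measure R d n) (S1 X S b c) (Ex1 S) /\
  consistent_pp strict X (@factorial_moment_measure R d n) (S2 X S b c) (Ex2 S).
Proof.
move=> n_gt0 mX _ mS S_consistent b_bregman c_gt0.
split.
- apply: (consistent_pp_selections (Gamma := @moment_measure R d n) (Ex := Ex1 S)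
            mX mS S_consistent b_bregman c_gt0 _ (S1E X S b c n_gt0)).
    by move=> dO O P Phi A; apply: eq_integral => w _; rewrite /= big_selections.
  by apply/funext => mu; apply/funext => s; rewrite /Ex1 big_selections.
- apply: (consistent_pp_selections (Gamma := @factorial_moment_measure R d n) (Ex := Ex2 S)
            mX mS S_consistent b_bregman c_gt0 _ (S2E X S b c)).
    by move=> dO O P Phi A; apply: eq_integral => w _; rewrite /= big_selections.
  by apply/funext => mu; apply/funext => s; rewrite /Ex2 big_selections.
Qed.
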